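(* If $\dfrac{\mathfrak{g}}{\sim}\subseteq\downarrow\mathfrak{Z}$, then ${\rm Eigen}(\sigma_{\varphi\restriction_{\frac{\mathfrak{g}}{\sim}},\mathfrak{w}^{\frac{\mathfrak{g}}{\sim}}},V^{\frac{\mathfrak{g}}{\sim}})\setminus\{0\}=\varnothing$.
   Context: $V$ is a vector space over a field $F$, $\Gamma$ a nonempty set, $\varphi:\Gamma\to\Gamma$ a self-map, and $\mathfrak{w}=(\mathfrak{w}_\alpha)_{\alpha\in\Gamma}\in F^\Gamma$. The weighted generalized shift is $\sigma_{\varphi,\mathfrak{w}}:V^\Gamma\to V^\Gamma$, $(x_\alpha)_{\alpha\in\Gamma}\mapsto(\mathfrak{w}_\alpha x_{\varphi(\alpha)})_{\alpha\in\Gamma}$. For nonempty $D\subseteq\Gamma$, $\mathfrak{w}^D:=(\mathfrak{w}_\alpha)_{\alpha\in D}$. $\mathfrak{Z}:=\{\alpha\in\Gamma:\mathfrak{w}_\alpha=0\}$ and $\downarrow\mathfrak{Z}:=\bigcup_{n\geq0}\varphi^{-n}(\mathfrak{Z})$. The relation $\sim$ on $\Gamma$ is defined by $\alpha\sim\beta$ iff there exist $n,m\geq1$ with $\varphi^n(\alpha)=\varphi^m(\beta)$; it is an equivalence relation, $\frac{\alpha}{\sim}$ denotes the equivalence class of $\alpha$ (which is mapped into itself by $\varphi$), and $\mathfrak{g}\in\Gamma$. For a linear map $T:W\to W$, ${\rm Eigen}(T,W)$ is the set of all $r\in F$ such that $T(x)=rx$ for some nonzero $x\in W$. *)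

From mathcomp Require Import all_boot all_algebra.
Set Implicit Arguments. Unset Strict Implicit. Unset Printing Implicit Defensive.
Import GRing.Theory.
Local Open Scope ring_scope.

Section WGS.
Variables (F : fieldType) (V : lmodType F).

Definition wshift (G : Type) (phi : G -> G) (w : G -> F) (x : G -> V) : G -> V :=
  fun a => w a *: x (phi a).

Definition Eigen (G : Type) (T : (G -> V) -> (G -> V)) (r : F) : Prop :=
  exists x : G -> V, x <> (fun _ => 0) /\ T x = (fun a => r *: x a).
End WGS.

Definition sim (G : Type) (phi : G -> G) (a b : G) : Prop :=
  exists n m : nat, (1 <= n)%N /\ (1 <= m)%N /\ iter n phi a = iter m phi b.

Definition cls (G : Type) (phi : G -> G) (g : G) := {a : G | sim phi g a}.

Lemma sim_phi (G : Type) (phi : G -> G) (g a : G) :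
  sim phi g a -> sim phi g (phi a).
Proof.
move=> [n [m [hn [hm e]]]]; exists n.+1, m; split => //; split => //.
by rewrite -iterSr iterS e -iterS.
Qed.

Definition phi_res (G : Type) (phi : G -> G) (g : G) (a : cls phi g) : cls phi g :=
  exist _ (phi (proj1_sig a)) (sim_phi (proj2_sig a)).

Definition w_res (F : Type) (G : Type) (phi : G -> G) (g : G) (w : G -> F)
  (a : cls phi g) : F := w (proj1_sig a).

Definition downZ (F : fieldType) (G : Type) (phi : G -> G) (w : G -> F) (a : G) : Prop :=
  exists n : nat, w (iter n phi a) = 0.

From mathcomp Require Import all_boot all_algebra.
From Stdlib Require Import FunctionalExtensionality.
Local Open Scope ring_scope.
Import GRing.Theory.

(* An eigenvector x for r != 0 satisfies r x_a = w_a x_(phi a), so x_a vanishes as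
   soon as w_a or x_(phi a) does; by induction x_a = 0 whenever some w_(phi^n a) = 0.
   Since phi maps g/~ into itself, the restricted operator is again a weighted
   shift, and the hypothesis puts every point of g/~ in the downset of its zeros. *)

Section WshiftEigen.
Variables (F : fieldType) (V : lmodType F) (T : Type) (f : T -> T) (w : T -> F).
Variables (r : F) (x : T -> V).
Hypotheses (r_neq0 : r != 0) (x_eigen : wshift f w x = (fun a => r *: x a)).

Lemma wshift_eigenvector_vanish a : w a *: x (f a) = 0 -> x a = 0.
Proof.
move=> wx0; have /eqP := congr1 (fun y => y a) x_eigen.
by rewrite /wshift /= wx0 eq_sym scaler_eq0 (negbTE r_neq0) => /eqP.
Qed.

Lemma wshift_eigenvector_vanish_iter n a : w (iter n f a) = 0 -> x a = 0.
Proof.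
elim: n a => [|n IHn] a w0; apply: wshift_eigenvector_vanish.
  by rewrite w0 scale0r.
by rewrite (IHn (f a)) ?scaler0 // -iterSr.
Qed.

End WshiftEigen.

Lemma wshift_Eigen_eq0 (F : fieldType) (V : lmodType F) (T : Type)
    (f : T -> T) (w : T -> F) (r : F) :
  (forall a, downZ f w a) -> Eigen (wshift (V := V) f w) r -> r = 0.
Proof.
move=> hZ [x [x_neq0 x_eigen]]; apply/eqP/negPn/negP => r_neq0.
apply: x_neq0; apply: functional_extensionality => a.
have [n w0] := hZ a.
exact: wshift_eigenvector_vanish_iter r_neq0 x_eigen n a w0.
Qed.

Lemma val_iter_phi_res (G : Type) (phi : G -> G) (g : G) n (a : cls phi g) :
  proj1_sig (iter n (@phi_res G phi g) a) = iter n phi (proj1_sig a).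
Proof. by elim: n => //= n ->. Qed.

Lemma downZ_res (F : fieldType) (G : Type) (phi : G -> G) (w : G -> F) (g : G)
    (a : cls phi g) :
  downZ phi w (proj1_sig a) -> downZ (@phi_res G phi g) (w_res w) a.
Proof. by move=> [n w0]; exists n; rewrite /w_res val_iter_phi_res. Qed.

Theorem corollary2p3 (F : fieldType) (V : lmodType F) (G : Type)
  (phi : G -> G) (w : G -> F) (g : G) :
  (forall a : G, sim phi g a -> downZ phi w a) ->
  forall r : F,
    Eigen (wshift (V := V) (@phi_res G phi g) (w_res (phi := phi) (g := g) w)) r ->
    r = 0.
Proof.
move=> hZ r; apply: wshift_Eigen_eq0 => a.
exact/downZ_res/hZ/(proj2_sig a).
Qed.
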